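(* Fix $n\ge1$ and a real number $\kappa>0$. Let $\ell_1,\dots,\ell_m\in\{1,\dots,n\}$ ($m\ge 0$) and put $U=A^{(\ell_1)}\odot\cdots\odot A^{(\ell_m)}$ (with $U=E$ if $m=0$), $U=(u_{i,j})$. Then for all $1\le i\le j\le n$, $$u_{i,j}=\kappa\cdot N_{i,j},$$ where $N_{i,j}$ is the maximal length of a nondecreasing subsequence of $[\ell_1,\dots,\ell_m]$ all of whose terms lie in $\{i,i+1,\dots,j\}$ (with $N_{i,j}=0$ if there is none); and $u_{i,j}=-\infty$ for $i>j$.
   Context: Tropical (max-plus) semiring: $\mathbb T=\mathbb R\cup\{-\infty\}$ with $a\oplus b=\max(a,b)$, $a\odot b=a+b$; tropical matrix product $(A\odot B)_{i,j}=\max_t(a_{i,t}+b_{t,j})$, tropical matrix sum is entrywise max. For $\ell\in\{1,\dots,n\}$, $A^{(\ell)}$ is the $n\times n$ tropical matrix with $A^{(\ell)}_{i,j}=\kappa$ if $i\le\ell\le j$, $A^{(\ell)}_{i,j}=0$ if $i\le j$ but not $i\le \ell\le j$, and $A^{(\ell)}_{i,j}=-\infty$ if $i>j$. $E$ is the $n\times n$ matrix with $E_{i,j}=0$ for $i\le j$ and $-\infty$ for $i>j$. Subsequences are taken by positions. *)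

(* Tropical (max-plus) semiring over a real ordered domain R,
   represented as option R with None = -infinity. *)
From HB Require Import structures.
From mathcomp Require Import all_boot all_order all_algebra.
Set Implicit Arguments. Unset Strict Implicit. Unset Printing Implicit Defensive.
Import Order.TTheory GRing.Theory Num.Theory.
Local Open Scope ring_scope.

Section Trop.
Variable R : realDomainType.

Definition tadd (a b : option R) : option R :=
  match a, b with
  | None, x => x
  | x, None => x
  | Some x, Some y => Some (Num.max x y)
  end.

Definition tmul (a b : option R) : option R :=
  match a, b with
  | Some x, Some y => Some (x + y)
  | _, _ => None
  end.

Variable n : nat.

(* n x n tropical matrices, indices 1..n encoded as 'I_n (index k+1 <-> ordinal k) *)
Definition tmx := 'I_n -> 'I_n -> option R.

Definition tmatmul (A B : tmx) : tmx :=
  fun i j => \big[tadd/None]_(t < n) tmul (A i t) (B t j).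

Definition Emx : tmx := fun i j => if (i <= j)%N then Some 0 else None.

Definition Amx (kappa : R) (l : 'I_n) : tmx :=
  fun i j => if (i <= j)%N then
               (if (i <= l <= j)%N then Some kappa else Some 0)
             else None.

Fixpoint Uprod (kappa : R) (ls : seq 'I_n) : tmx :=
  match ls with
  | [::] => Emx
  | [:: a] => Amx kappa a
  | a :: s => tmatmul (Amx kappa a) (Uprod kappa s)
  end.
End Trop.

(* N_{i,j}: maximal length of a (position-)subsequence of ls that is
   nondecreasing and has all terms in {i,...,j}; 0 if none. Subsequences
   by positions are exactly the masks of ls. *)
Definition Nij (n : nat) (ls : seq 'I_n) (i j : 'I_n) : nat :=
  \max_(b : (size ls).-tuple bool |
          sorted (fun x y : 'I_n => (x <= y)%N) (mask b ls)
          && all (fun x : 'I_n => (i <= x <= j)%N) (mask b ls))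
     size (mask b ls).

(* Unfolding the tropical product along its first factor, the (i, j) entry of
   A^(a) (.) U is the maximum over i <= t <= j of kappa * [i <= a <= t] plus
   the (t, j) entry of U.  The longest nondecreasing subsequence of a :: s in
   {i, ..., j} satisfies the same recursion: either it starts with a, and
   then continues inside {t, ..., j} for some t >= a, or it avoids a. *)

From HB Require Import structures.
From mathcomp Require Import all_boot all_order all_algebra.
Set Implicit Arguments. Unset Strict Implicit. Unset Printing Implicit Defensive.
Import Order.TTheory GRing.Theory Num.Theory.
Local Open Scope ring_scope.

Section LongestNondecreasingSubsequence.
Variable n : nat.
Implicit Types (i j t a : 'I_n) (s w : seq 'I_n).

Definition nondecreasing_in i j w :=
  sorted (fun x y : 'I_n => (x <= y)%N) w
  && all (fun x : 'I_n => (i <= x <= j)%N) w.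

Lemma leq_size_Nij s i j w :
  subseq w s -> nondecreasing_in i j w -> (size w <= Nij s i j)%N.
Proof.
case/subseqP=> m size_m -> w_nd.
have size_m' : size m == size s by apply/eqP.
exact: (leq_bigmax_cond (Tuple size_m')).
Qed.

Lemma Nij_witness s i j :
  exists w, [/\ subseq w s, nondecreasing_in i j w & size w = Nij s i j].
Proof.
apply: (big_ind (fun k => exists w,
  [/\ subseq w s, nondecreasing_in i j w & size w = k])).
- by exists [::]; rewrite sub0seq.
- move=> k1 k2 [w1 [sub1 nd1 <-]] [w2 [sub2 nd2 <-]].
  by case: leqP => _; [exists w2 | exists w1].
- by move=> b nd_b; exists (mask b s); split=> //; apply: mask_subseq.
Qed.

Lemma Nij_is_max s i j k :
  (exists w, [/\ subseq w s, nondecreasing_in i j w & size w = k]) ->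
  (forall w, subseq w s -> nondecreasing_in i j w -> (size w <= k)%N) ->
  Nij s i j = k.
Proof.
move=> [w [sub_w nd_w <-]] max_k; apply/eqP; rewrite eqn_leq leq_size_Nij // andbT.
by have [w' [sub_w' nd_w' <-]] := Nij_witness s i j; apply: max_k.
Qed.

Lemma nondecreasing_in_cons i j a w :
  nondecreasing_in i j (a :: w) =
  [&& (i <= a <= j)%N, nondecreasing_in a j w & nondecreasing_in i j w].
Proof.
have leq_ord_trans : transitive (fun x y : 'I_n => (x <= y)%N).
  by move=> y x z; apply: leq_trans.
rewrite /nondecreasing_in /=; case a_ij: (i <= a <= j)%N; rewrite ?andbF //=.
apply/idP/idP.
- case/andP=> path_aw all_w.
  rewrite (path_sorted path_aw) all_w !andbT /=.
  apply/allP=> x x_w; case/andP: (allP all_w x x_w) => _ ->.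
  by rewrite (allP (order_path_min leq_ord_trans path_aw) x x_w).
- case/and3P=> /andP[sorted_w all_aw] _ ->; rewrite andbT.
  by case: w sorted_w all_aw => //= b w -> /andP[/andP[-> _] _].
Qed.

Lemma nondecreasing_in_widen i i' j w :
  (i <= i')%N -> nondecreasing_in i' j w -> nondecreasing_in i j w.
Proof.
move=> le_ii' /andP[sorted_w all_w]; rewrite /nondecreasing_in sorted_w /=.
apply/allP=> x x_w; case/andP: (allP all_w x x_w) => le_i'x ->.
by rewrite (leq_trans le_ii' le_i'x).
Qed.

Lemma Nij_nil i j : Nij [::] i j = 0%N.
Proof.
by have [w [+ _ <-]] := Nij_witness [::] i j; rewrite subseq0 => /eqP ->.
Qed.

Lemma Nij_seq1 a i j : Nij [:: a] i j = (i <= a <= j)%N.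
Proof.
apply: Nij_is_max.
  case a_ij: (i <= a <= j)%N; last by exists [::]; rewrite sub0seq.
  by exists [:: a]; rewrite /= eqxx /nondecreasing_in /= a_ij.
move=> [|b [|c w]] // sub_w; last by have := size_subseq sub_w.
have : b \in [:: a] by rewrite (mem_subseq sub_w) ?mem_seq1.
by rewrite mem_seq1 => /eqP -> /andP[_] /=; rewrite andbT => ->.
Qed.

Lemma Nij_cons a s i j : (i <= j)%N ->
  Nij (a :: s) i j =
  \max_(t : 'I_n | (i <= t <= j)%N) ((i <= a <= t)%N + Nij s t j)%N.
Proof.
move=> le_ij; apply/eqP; rewrite eqn_leq; apply/andP; split.
  have [[|b w] [sub_w nd_w <-]] := Nij_witness (a :: s) i j => //.
  move: sub_w nd_w => /=; case: eqP => [-> sub_w nd_w | _ sub_w nd_w].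
    move: nd_w; rewrite nondecreasing_in_cons => /and3P[a_ij nd_aw _].
    have /andP[le_ia _] := a_ij.
    apply: leq_trans (leq_bigmax_cond a a_ij).
    by rewrite le_ia leqnn add1n ltnS leq_size_Nij.
  apply: leq_trans (leq_bigmax_cond i _); last by rewrite leqnn le_ij.
  exact: leq_trans (leq_size_Nij sub_w nd_w) (leq_addl _ _).
apply/bigmax_leqP=> t /andP[le_it le_tj].
have [w [sub_w nd_w <-]] := Nij_witness s t j.
have nd_iw := nondecreasing_in_widen le_it nd_w.
case a_it: (i <= a <= t)%N.
  have /andP[le_ia le_at] := a_it.
  apply: (@leq_size_Nij _ _ _ (a :: w)); first by rewrite /= eqxx.
  by rewrite nondecreasing_in_cons le_ia (leq_trans le_at le_tj)
             (nondecreasing_in_widen le_at nd_w) nd_iw.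
by rewrite add0n leq_size_Nij // (subseq_trans sub_w (subseq_cons s a)).
Qed.

End LongestNondecreasingSubsequence.

Section TropicalProducts.
Variables (R : realDomainType) (n : nat) (kappa : R).
Hypothesis kappa_ge0 : 0 <= kappa.
Implicit Types (i j t a : 'I_n) (s : seq 'I_n).

Lemma taddA : associative (@tadd R).
Proof. by case=> [x|] [y|] [z|] //=; rewrite maxA. Qed.

Lemma taddC : commutative (@tadd R).
Proof. by case=> [x|] [y|] //=; rewrite maxC. Qed.

Lemma tadd0t : left_id None (@tadd R).
Proof. by case. Qed.

HB.instance Definition _ :=
  Monoid.isComLaw.Build (option R) None (@tadd R) taddA taddC tadd0t.

Definition ktimes (k : nat) : option R := Some (kappa * k%:R).

Lemma tadd_ktimes k1 k2 : tadd (ktimes k1) (ktimes k2) = ktimes (maxn k1 k2).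
Proof.
rewrite /ktimes /=; congr Some.
by case: (leqP k1 k2) => [le|/ltnW le];
  [rewrite max_r ?(maxn_idPr le) | rewrite max_l ?(maxn_idPl le)];
  rewrite // ler_wpM2l // ler_nat.
Qed.

Lemma big_tadd_ktimes (P : pred 'I_n) (g : 'I_n -> nat) t0 : P t0 ->
  \big[@tadd R/None]_(t | P t) ktimes (g t) = ktimes (\max_(t | P t) g t).
Proof.
move=> P_t0.
have [//|[big_None _]] :
    \big[@tadd R/None]_(t | P t) ktimes (g t) = ktimes (\max_(t | P t) g t)
    \/ \big[@tadd R/None]_(t | P t) ktimes (g t) = None
        /\ \max_(t | P t) g t = 0%N.
  apply: (big_ind2 (fun x k => x = ktimes k \/ x = None /\ k = 0%N)).
  - by right.
  - move=> x1 x2 k1 k2 [->|[-> ->]] [->|[-> ->]];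
      rewrite ?tadd_ktimes ?maxn0 ?max0n /=; by [left | right].
  - by move=> t _; left.
(* The summand at [t0] is finite, so the sum is not [-oo]. *)
move: big_None; rewrite (bigD1 t0) // /ktimes.
by case: (\big[_/_]_(_ | _) _).
Qed.

Definition Nmx s : tmx R n :=
  fun i j => if (i <= j)%N then ktimes (Nij s i j) else None.

Lemma Emx_Nmx i j : @Emx R n i j = Nmx [::] i j.
Proof. by rewrite /Emx /Nmx /ktimes Nij_nil mulr0. Qed.

Lemma Amx_Nmx a i j : Amx kappa a i j = Nmx [:: a] i j.
Proof.
rewrite /Amx /Nmx /ktimes Nij_seq1.
by case: (i <= j)%N; case: (i <= a <= j)%N; rewrite ?mulr1 ?mulr0.
Qed.

Lemma tmatmul_Amx_Nmx a s (B : tmx R n) :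
  (forall t j, B t j = Nmx s t j) ->
  forall i j, tmatmul (Amx kappa a) B i j = Nmx (a :: s) i j.
Proof.
move=> B_Nmx i j; rewrite /tmatmul /Nmx.
under eq_bigr => t _ do rewrite B_Nmx Amx_Nmx /Nmx Nij_seq1.
case: (leqP i j) => [le_ij | lt_ji].
  rewrite Nij_cons // -(big_tadd_ktimes _ (_ : (i <= i <= j)%N)) ?leqnn ?le_ij //.
  rewrite [RHS]big_mkcond; apply: eq_bigr => t _.
  by case: (leqP i t) => //= _; case: (leqP t j) => //= _;
    rewrite /ktimes -mulrDr -natrD.
rewrite big1 // => t _.
case: (leqP i t) => //= le_it.
by rewrite leqNgt (leq_trans lt_ji le_it); case: (i <= a <= t)%N.
Qed.

Lemma Uprod_Nmx s i j : Uprod kappa s i j = Nmx s i j.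
Proof.
elim: s i j => [|a [|b s] IHs] i j; first exact: Emx_Nmx.
  exact: Amx_Nmx.
exact: tmatmul_Amx_Nmx.
Qed.

End TropicalProducts.

Theorem mainTheorem5 (R : realDomainType) (n : nat) (hn : (0 < n)%N)
    (kappa : R) (hk : 0 < kappa) (ls : seq 'I_n) :
  forall i j : 'I_n,
    ((i <= j)%N -> Uprod kappa ls i j = Some (kappa * (Nij ls i j)%:R)) /\
    ((j < i)%N -> Uprod kappa ls i j = None).
Proof.
move=> i j; rewrite Uprod_Nmx /Nmx; last exact: ltW.
by split=> [-> | lt_ji] //; rewrite leqNgt lt_ji.
Qed.
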